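(* Let the joint distributions of the pairs $(\mathbf{X},\mathbf{Y_1})$ and $(\mathbf{X},\mathbf{Y_2})$ be given as in the context. Then there exists a random vector $\mathbf{Y}$ such that $(\mathbf{X},\mathbf{Y_1},\mathbf{Y_2},\mathbf{Y})$ is jointly Gaussian (with the pairs $(\mathbf{X},\mathbf{Y_i})$ having the given distributions), $\mathbf{X}\leftrightarrow\mathbf{Y}\leftrightarrow(\mathbf{Y_1},\mathbf{Y_2})$, and $$K^{-1}_{\mathbf{X}|\mathbf{Y}}=K^{-1}_{\mathbf{X}|\mathbf{Y_1}}+\widehat{K}=K^{-1}_{\mathbf{X}|\mathbf{Y_2}}+\widetilde{K},\qquad \widehat{K}=\begin{pmatrix}A&0\\0&0\end{pmatrix},\ \widetilde{K}=\begin{pmatrix}0&0\\0&-B\end{pmatrix}.$$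
   Context: $\mathbf{X}$ ($k\times1$) and $\mathbf{Y_i}$ ($k_i\times1$), $i=1,2$, are such that each pair $(\mathbf{X},\mathbf{Y_i})$ is jointly Gaussian with zero mean and invertible conditional covariance $K_{\mathbf{X}|\mathbf{Y_i}}$. Assume $l_1+l_2=k$ and $K^{-1}_{\mathbf{X}|\mathbf{Y_2}}-K^{-1}_{\mathbf{X}|\mathbf{Y_1}}=\begin{pmatrix}A&0\\0&B\end{pmatrix}$ with $A\succeq0$ an $l_1\times l_1$ diagonal matrix and $B\prec0$ an $l_2\times l_2$ diagonal matrix. $K_{\mathbf{X}|\mathbf{Z}}$ denotes the conditional covariance of $\mathbf{X}$ given $\mathbf{Z}$; $\leftrightarrow$ denotes a Markov chain. *)

(* covariance-matrix level formalization of zero-mean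
   jointly Gaussian vectors. *)
From HB Require Import structures.
From mathcomp Require Import all_boot all_order all_algebra.
From mathcomp Require Import reals.
Set Implicit Arguments. Unset Strict Implicit. Unset Printing Implicit Defensive.
Import Order.TTheory GRing.Theory Num.Theory.
Local Open Scope ring_scope.

Section Gauss.
Variable R : realType.

Definition psd n (A : 'M[R]_n) : Prop :=
  A^T = A /\ forall v : 'cV[R]_n, 0 <= (v^T *m A *m v) 0 0.

Definition negdef n (A : 'M[R]_n) : Prop :=
  A^T = A /\ forall v : 'cV[R]_n, v != 0 -> (v^T *m A *m v) 0 0 < 0.

(* covariance between the sub-vectors of the big Gaussian vector selected by
   the coordinate maps f and g, given the joint covariance K *)
Definition covsub n a b (K : 'M[R]_n) (f : 'I_a -> 'I_n) (g : 'I_b -> 'I_n)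
  : 'M[R]_(a, b) := \matrix_(i, j) K (f i) (g j).

(* conditional cross-covariance  K_{U V | W}  (Gaussian conditioning,
   generalized inverse pinvmx of K_W) *)
Definition condcrosscov n a b c (K : 'M[R]_n) (f : 'I_a -> 'I_n)
  (h : 'I_b -> 'I_n) (g : 'I_c -> 'I_n) : 'M[R]_(a, b) :=
  covsub K f h - covsub K f g *m pinvmx (covsub K g g) *m covsub K g h.

Definition condcov n a c (K : 'M[R]_n) (f : 'I_a -> 'I_n) (g : 'I_c -> 'I_n)
  : 'M[R]_a := condcrosscov K f f g.

(* Markov chain U <-> W <-> V for jointly Gaussian vectors:
   U and V are conditionally uncorrelated (hence independent) given W *)
Definition gauss_markov n a b c (K : 'M[R]_n) (f : 'I_a -> 'I_n)
  (g : 'I_c -> 'I_n) (h : 'I_b -> 'I_n) : Prop :=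
  condcrosscov K f h g = 0.

End Gauss.

Definition catidx n a b (f : 'I_a -> 'I_n) (g : 'I_b -> 'I_n) :
  'I_(a + b) -> 'I_n :=
  fun i => match split i with inl x => f x | inr y => g y end.

From HB Require Import structures.
From mathcomp Require Import all_boot all_order all_algebra.
From mathcomp Require Import reals ring.
Import Order.TTheory GRing.Theory Num.Theory.
Local Open Scope ring_scope.

(* Write [K_i = [[S, C_i], [C_i^T, T_i]]] and [D_i = S - C_i T_i^+ C_i^T] for the
   conditional covariances.  The precision
   [P = D_1^-1 + diag(A, 0) = D_2^-1 + diag(0, -B)] dominates both [D_i^-1], and
   inversion is antitone on positive definite matrices, so [D = P^-1] satisfies
   [D <= D_i].  Hence [M = S - D] keeps [[M, C_i], [C_i^T, T_i]]
   psd (its Schur complement is [D_i - D]), so each [Y_i] regresses as [F_i W + V_i] on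
   some [W] of covariance [M].  Taking [Y = W] and [X = W + Z], with [Z] of covariance
   [D] independent of the rest, gives the prescribed pairs [(X, Y_i)], the Markov chain
   [X - Y - (Y_1, Y_2)] and [K_{X|Y} = D = P^-1]. *)

Definition blk1 a b c d : 'I_a -> 'I_(a + (b + (c + d))) :=
  fun i => lshift (b + (c + d)) i.
Definition blk2 a b c d : 'I_b -> 'I_(a + (b + (c + d))) :=
  fun i => rshift a (lshift (c + d) i).
Definition blk3 a b c d : 'I_c -> 'I_(a + (b + (c + d))) :=
  fun i => rshift a (rshift b (lshift d i)).
Definition blk4 a b c d : 'I_d -> 'I_(a + (b + (c + d))) :=
  fun i => rshift a (rshift b (rshift c i)).

Set Implicit Arguments. Unset Strict Implicit.

Lemma quad_ge0_coef1_eq0 (F : realFieldType) (a s : F) :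
  0 <= a -> (forall t, 0 <= a * t ^+ 2 + s * t) -> s = 0.
Proof.
move=> a_ge0 quad_ge0; have c_neq0 : a + 1 != 0 by rewrite lt0r_neq0 ?ltr_wpDl.
have := quad_ge0 (- s / (a + 1)).
have -> : a * (- s / (a + 1)) ^+ 2 + s * (- s / (a + 1)) = - (s / (a + 1)) ^+ 2.
  by field.
rewrite oppr_ge0 => sq_le0.
have /eqP : (s / (a + 1)) ^+ 2 = 0 by apply/eqP; rewrite eq_le sq_le0 sqr_ge0.
by rewrite sqrf_eq0 mulf_eq0 invr_eq0 (negPf c_neq0) orbF => /eqP.
Qed.

Lemma dotmx_self_eq0 (R : realDomainType) n (v : 'cV[R]_n) :
  (v^T *m v) 0 0 = 0 -> v = 0.
Proof.
rewrite mxE => sum_sq0; apply/matrixP => i j; rewrite (ord1 j) mxE.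
have sq_ge0 k : 0 <= v^T 0 k * v k 0 by rewrite mxE -expr2 sqr_ge0.
have /(_ i isT)/eqP := psumr_eq0P (fun k _ => sq_ge0 k) sum_sq0.
by rewrite mxE mulf_eq0 orbb => /eqP.
Qed.

Section PsdMatrices.
Variable R : realType.

Definition bform n k (A : 'M[R]_(n, k)) (x : 'cV[R]_n) (y : 'cV[R]_k) : R :=
  (x^T *m A *m y) 0 0.

Lemma bformC n (A : 'M[R]_n) x y : A^T = A -> bform A x y = bform A y x.
Proof.
move=> sA; rewrite /bform.
have -> : y^T *m A *m x = (x^T *m A *m y)^T by rewrite !trmx_mul trmxK sA mulmxA.
by rewrite [RHS]mxE.
Qed.

Lemma bformDm n k (A B : 'M[R]_(n, k)) x y :
  bform (A + B) x y = bform A x y + bform B x y.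
Proof. by rewrite /bform mulmxDr mulmxDl mxE. Qed.

Lemma bformDl n k (A : 'M[R]_(n, k)) x x' y :
  bform A (x + x') y = bform A x y + bform A x' y.
Proof. by rewrite /bform linearD /= !mulmxDl mxE. Qed.

Lemma bformDr n k (A : 'M[R]_(n, k)) x y y' :
  bform A x (y + y') = bform A x y + bform A x y'.
Proof. by rewrite /bform mulmxDr mxE. Qed.

Lemma bformZl n k (A : 'M[R]_(n, k)) a x y : bform A (a *: x) y = a * bform A x y.
Proof. by rewrite /bform linearZ /= -!scalemxAl mxE. Qed.

Lemma bformZr n k (A : 'M[R]_(n, k)) a x y : bform A x (a *: y) = a * bform A x y.
Proof. by rewrite /bform -scalemxAr mxE. Qed.

Lemma psd0 n : psd (0 : 'M[R]_n).
Proof. by split=> [|v]; rewrite ?trmx0 // mulmx0 mul0mx mxE. Qed.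

Lemma psdD n (A B : 'M[R]_n) : psd A -> psd B -> psd (A + B).
Proof.
move=> [sA A_ge0] [sB B_ge0]; split=> [|v]; first by rewrite linearD /= sA sB.
by have := addr_ge0 (A_ge0 v) (B_ge0 v); rewrite -!/(bform _ _ _) bformDm.
Qed.

Lemma psd_mulmx_tr n p (L : 'M[R]_(n, p)) (S : 'M[R]_p) :
  psd S -> psd (L *m S *m L^T).
Proof.
move=> [sS S_ge0]; split=> [|v]; first by rewrite !trmx_mul trmxK sS mulmxA.
by have := S_ge0 (L^T *m v); rewrite trmx_mul trmxK !mulmxA.
Qed.

Lemma psd_block_diag n1 n2 (A : 'M[R]_n1) (B : 'M[R]_n2) :
  psd A -> psd B -> psd (block_mx A 0 0 B).
Proof.
move=> Apsd Bpsd.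
have -> : block_mx A 0 0 B = col_mx 1%:M 0 *m A *m (col_mx 1%:M 0)^T
                             + col_mx 0 1%:M *m B *m (col_mx 0 1%:M)^T.
  rewrite !tr_col_mx !trmx0 !trmx1 [_ *m A]mul_col_mx [_ *m B]mul_col_mx.
  rewrite !mul_col_row.
  by rewrite !(mul1mx, mulmx1, mul0mx, mulmx0) add_block_mx !(addr0, add0r).
by apply: psdD; apply: psd_mulmx_tr.
Qed.

Lemma negdef_psdN n (B : 'M[R]_n) : negdef B -> psd (- B).
Proof.
move=> [sB B_lt0]; split=> [|v]; first by rewrite linearN /= sB.
rewrite mulmxN mulNmx mxE oppr_ge0.
have [->|v_neq0] := eqVneq v 0; first by rewrite mulmx0 mxE.
exact/ltW/B_lt0.
Qed.

Lemma psd_invmx n (S : 'M[R]_n) : psd S -> S \in unitmx -> psd (invmx S).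
Proof.
move=> [sS S_ge0] uS; split=> [|v]; first by rewrite trmx_inv sS.
have := S_ge0 (invmx S *m v).
by rewrite trmx_mul trmx_inv sS -[_ *m S]mulmxA mulVmx // mulmx1 mulmxA.
Qed.

(* For [z = S w], the form at [w + t z] is [z^T S z t^2 + 2 z^T z t]. *)
Lemma psd_mulmx_eq0 n (S : 'M[R]_n) w : psd S -> bform S w w = 0 -> S *m w = 0.
Proof.
move=> [sS S_ge0] q0; set z := S *m w.
have wSz : bform S w z = (z^T *m z) 0 0 by rewrite /bform -{1}sS -trmx_mul.
have zSw : bform S z w = (z^T *m z) 0 0 by rewrite bformC.
have quad_ge0 t : 0 <= bform S z z * t ^+ 2 + (2 * (z^T *m z) 0 0) * t.
  have := S_ge0 (w + t *: z); rewrite -/(bform _ _ _).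
  rewrite bformDl !bformDr !bformZl !bformZr q0 wSz zSw.
  by congr (0 <= _); ring.
have /eqP := quad_ge0_coef1_eq0 (S_ge0 z) quad_ge0.
by rewrite mulf_eq0 pnatr_eq0 /= => /eqP /dotmx_self_eq0.
Qed.

Lemma psd_unitmxD n (S E : 'M[R]_n) :
  psd S -> S \in unitmx -> psd E -> S + E \in unitmx.
Proof.
move=> Spsd uS Epsd; have [sSE _] := psdD Spsd Epsd.
rewrite -row_free_unit -kermx_eq0; apply/eqP/row_matrixP => i; rewrite row0.
set r := row i _; have rSE : r *m (S + E) = 0 by rewrite -row_mul mulmx_ker row0.
have SEr : (S + E) *m r^T = 0 by rewrite -sSE -trmx_mul rSE trmx0.
have qSE : bform S r^T r^T + bform E r^T r^T = 0.
  by rewrite -bformDm /bform -mulmxA SEr mulmx0 mxE.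
have /psd_mulmx_eq0 Sr : bform S r^T r^T = 0.
  by move/eqP: qSE; rewrite paddr_eq0 ?(proj2 Spsd) ?(proj2 Epsd) // => /andP[/eqP].
have /(congr1 trmx) := congr1 (mulmx (invmx S)) (Sr Spsd).
by rewrite mulmx0 mulmxA mulVmx // mul1mx trmxK trmx0.
Qed.

(* With [P = D^-1 + E] and [D' = P^-1]: [D - D' = D' E D' + (D' E) D (D' E)^T]. *)
Lemma psd_subr_invmxD n (D E : 'M[R]_n) : psd D -> D \in unitmx -> psd E ->
  psd (D - invmx (invmx D + E)).
Proof.
move=> Dpsd uD Epsd; have Dipsd := psd_invmx Dpsd uD.
have uP : invmx D + E \in unitmx by rewrite psd_unitmxD ?unitmx_inv.
have [sD' _] := psd_invmx (psdD Dipsd Epsd) uP.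
set D' := invmx (invmx D + E) in sD' *.
have eE : E = invmx D' - invmx D by rewrite /D' invmxK addrAC subrr add0r.
have uD' : D' \in unitmx by rewrite unitmx_inv.
have D'ED : D' *m E *m D = D - D'.
  by rewrite eE mulmxBr mulmxBl mulmxV // mul1mx -mulmxA mulVmx // mulmx1.
have DED' : D *m E *m D' = D - D'.
  by rewrite eE mulmxBr mulmxBl -mulmxA mulVmx // mulmx1 mulmxV // mul1mx.
have -> : D - D' = D' *m E *m D'^T + (D' *m E) *m D *m (D' *m E)^T.
  rewrite trmx_mul sD' (proj1 Epsd).
  have -> : D' *m E *m D *m (E *m D') = D' *m E *m (D *m E *m D') by rewrite !mulmxA.
  by rewrite DED' mulmxBr D'ED [RHS]addrC subrK.
by apply: psdD; apply: psd_mulmx_tr.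
Qed.

Section Blocks.
Variables (n k : nat) (P : 'M[R]_n) (G : 'M[R]_(n, k)) (T : 'M[R]_k).
Hypothesis Kpsd : psd (block_mx P G G^T T).

Lemma psd_block_dr : psd T.
Proof.
have := psd_mulmx_tr (row_mx 0 1%:M) Kpsd.
by rewrite tr_row_mx mul_row_block mul_row_col
  !(mul0mx, mul1mx, mulmx0, mulmx1, add0r, addr0, trmx0, trmx1).
Qed.

Lemma psd_block_swap : psd (block_mx T G^T G P).
Proof.
have := psd_mulmx_tr (block_mx 0 1%:M 1%:M 0) Kpsd.
rewrite tr_block_mx !trmx0 !trmx1 !mulmx_block.
by rewrite !(mul0mx, mul1mx, mulmx0, mulmx1, addr0, add0r).
Qed.

Lemma psd_block_ul : psd P.
Proof.
have := psd_mulmx_tr (row_mx 1%:M 0) Kpsd.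
by rewrite tr_row_mx mul_row_block mul_row_col
  !(mul0mx, mul1mx, mulmx0, mulmx1, add0r, addr0, trmx0, trmx1).
Qed.

Lemma psd_block_ker (v : 'cV[R]_k) : T *m v = 0 -> G *m v = 0.
Proof.
move=> Tv; have q0 : bform (block_mx P G G^T T) (col_mx 0 v) (col_mx 0 v) = 0.
  rewrite /bform tr_col_mx trmx0 mul_row_block mul_row_col !mul0mx !add0r.
  by rewrite mulmx0 add0r -mulmxA Tv mulmx0 mxE.
have := psd_mulmx_eq0 Kpsd q0.
rewrite mul_block_col Tv mulmx0 addr0 add0r => /eqP.
by rewrite col_mx_eq0 => /andP[/eqP].
Qed.

Lemma psd_block_submx : (G <= T)%MS.
Proof.
rewrite submxE; apply/eqP/matrixP => i j.
have /psd_block_ker : T *m (cokermx T *m delta_mx j (0 : 'I_1)) = 0.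
  by rewrite mulmxA mulmx_coker mul0mx.
by rewrite mulmxA -colE => /matrixP /(_ i 0); rewrite !mxE.
Qed.

Let H := G *m pinvmx T.
Let HT : H *m T = G. Proof. exact: mulmxKpV psd_block_submx. Qed.
Let GtE : G^T = T *m H^T. Proof. by rewrite -HT trmx_mul (proj1 psd_block_dr). Qed.

Lemma psd_schur : psd (P - G *m pinvmx T *m G^T).
Proof.
have := psd_mulmx_tr (row_mx 1%:M (- H)) Kpsd.
rewrite tr_row_mx mul_row_block !mul1mx !mulNmx HT subrr mul_row_col mul0mx.
by rewrite trmx1 mulmx1 addr0.
Qed.

Lemma psd_block_schur Q :
  psd (Q - G *m pinvmx T *m G^T) -> psd (block_mx Q G G^T T).
Proof.
move=> Qpsd; have -> : block_mx Q G G^T T =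
    col_mx H 1%:M *m T *m (col_mx H 1%:M)^T + block_mx (Q - H *m G^T) 0 0 0.
  have HGt : H *m G^T = G *m H^T by rewrite GtE mulmxA HT.
  rewrite tr_col_mx trmx1 mul_col_mx HT mul1mx mul_col_row !mulmx1 -GtE.
  by rewrite add_block_mx !addr0 HGt addrC subrK.
apply: psdD; first exact: psd_mulmx_tr psd_block_dr.
by apply: psd_block_diag => //; apply: psd0.
Qed.

End Blocks.

Lemma psd_block_regress n k (M : 'M[R]_n) (C : 'M[R]_(n, k)) (T : 'M[R]_k) :
  psd (block_mx M C C^T T) -> exists F : 'M[R]_(k, n), exists S : 'M[R]_k,
  [/\ psd S, F *m M = C^T, M *m F^T = C & T = F *m M *m F^T + S].
Proof.
move=> Kpsd; have [sM _] := psd_block_ul Kpsd.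
have Kpsd' : psd (block_mx T C^T C^T^T M) by rewrite trmxK; apply: psd_block_swap.
set F := C^T *m pinvmx M.
have FM : F *m M = C^T by apply: mulmxKpV (psd_block_submx Kpsd').
have MF : M *m F^T = C by rewrite -sM -trmx_mul FM trmxK.
exists F, (T - F *m M *m F^T); split=> //; last by rewrite addrC subrK.
by rewrite -mulmxA MF; have := psd_schur Kpsd'; rewrite trmxK.
Qed.

End PsdMatrices.

Section Covsub.
Variable R : realType.

Section Stack4.
Variables (a b c d p : nat) (A1 : 'M[R]_(a, p)) (A2 : 'M[R]_(b, p))
  (A3 : 'M[R]_(c, p)) (A4 : 'M[R]_(d, p)).
Let A := col_mx A1 (col_mx A2 (col_mx A3 A4)).

Lemma rowsub_blk1 : rowsub (blk1 a b c d) A = A1.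
Proof. by apply/matrixP => i j; rewrite mxE col_mxEu. Qed.
Lemma rowsub_blk2 : rowsub (blk2 a b c d) A = A2.
Proof. by apply/matrixP => i j; rewrite mxE col_mxEd col_mxEu. Qed.
Lemma rowsub_blk3 : rowsub (blk3 a b c d) A = A3.
Proof. by apply/matrixP => i j; rewrite mxE !col_mxEd col_mxEu. Qed.
Lemma rowsub_blk4 : rowsub (blk4 a b c d) A = A4.
Proof. by apply/matrixP => i j; rewrite mxE !col_mxEd. Qed.
End Stack4.

Lemma covsubD N a b (K K' : 'M[R]_N) (f : 'I_a -> 'I_N) (g : 'I_b -> 'I_N) :
  covsub (K + K') f g = covsub K f g + covsub K' f g.
Proof. by apply/matrixP => i j; rewrite !mxE. Qed.

Lemma covsub_mulmx_tr N p a b (L : 'M[R]_(N, p)) (S : 'M[R]_p)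
    (f : 'I_a -> 'I_N) (g : 'I_b -> 'I_N) :
  covsub (L *m S *m L^T) f g = rowsub f L *m S *m (rowsub g L)^T.
Proof. by rewrite [LHS]mxsub_mul -mul_rowsub_mx trmx_mxsub. Qed.

Lemma covsub_catl N a1 a2 b (K : 'M[R]_N) (f1 : 'I_a1 -> 'I_N)
    (f2 : 'I_a2 -> 'I_N) (g : 'I_b -> 'I_N) :
  covsub K (catidx f1 f2) g = col_mx (covsub K f1 g) (covsub K f2 g).
Proof.
by apply/matrixP => i j; rewrite /catidx !mxE; case: (split i) => i'; rewrite mxE.
Qed.

Lemma covsub_catr N a b1 b2 (K : 'M[R]_N) (f : 'I_a -> 'I_N)
    (g1 : 'I_b1 -> 'I_N) (g2 : 'I_b2 -> 'I_N) :
  covsub K f (catidx g1 g2) = row_mx (covsub K f g1) (covsub K f g2).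
Proof.
by apply/matrixP => i j; rewrite /catidx !mxE; case: (split j) => j'; rewrite mxE.
Qed.

Lemma condcov_lshift a b (K : 'M[R]_(a + b)) : K^T = K ->
  condcov K (@lshift a b) (@rshift a b) =
  ulsubmx K - ursubmx K *m pinvmx (drsubmx K) *m (ursubmx K)^T.
Proof.
move=> sK; rewrite trmx_ursub sK.
by rewrite ulsubmxEsub ursubmxEsub drsubmxEsub dlsubmxEsub.
Qed.

Lemma sym_submxK a b (K : 'M[R]_(a + b)) : K^T = K ->
  block_mx (ulsubmx K) (ursubmx K) (ursubmx K)^T (drsubmx K) = K.
Proof. by move=> sK; rewrite trmx_ursub sK submxK. Qed.

Lemma psd_condcov a b (K : 'M[R]_(a + b)) :
  psd K -> psd (condcov K (@lshift a b) (@rshift a b)).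
Proof.
move=> Kpsd; have [sK _] := Kpsd; rewrite condcov_lshift //.
by apply: psd_schur; rewrite sym_submxK.
Qed.

End Covsub.

Section Coupling.
Variables (R : realType) (n k1 k2 : nat).

Local Notation X := (blk1 n k1 k2 n).
Local Notation Y1 := (blk2 n k1 k2 n).
Local Notation Y2 := (blk3 n k1 k2 n).
Local Notation Y := (blk4 n k1 k2 n).

Section CouplingCov.
Variables (M D : 'M[R]_n) (F1 : 'M[R]_(k1, n)) (F2 : 'M[R]_(k2, n)).
Variables (S1 : 'M[R]_k1) (S2 : 'M[R]_k2).

(* The covariance of [(X, Y1, Y2, Y) = (W + Z, F1 W + V1, F2 W + V2, W)] for
   independent [W, Z, V1, V2] with covariances [M, D, S1, S2]. *)
Definition coupling_cov : 'M[R]_(n + (k1 + (k2 + n))) :=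
  let L1 := col_mx 1%:M (col_mx F1 (col_mx F2 1%:M)) in
  let L2 := col_mx 1%:M (col_mx 0 (col_mx 0 0)) in
  let L3 := col_mx 0 (col_mx 1%:M (col_mx 0 0)) in
  let L4 := col_mx 0 (col_mx 0 (col_mx 1%:M 0)) in
  L1 *m M *m L1^T + L2 *m D *m L2^T + L3 *m S1 *m L3^T + L4 *m S2 *m L4^T.

Local Ltac covsub_blocks :=
  rewrite /coupling_cov /= !covsubD !covsub_mulmx_tr
    ?rowsub_blk1 ?rowsub_blk2 ?rowsub_blk3 ?rowsub_blk4
    !(trmx1, trmx0, mul1mx, mulmx1, mul0mx, mulmx0, addr0, add0r).

Lemma psd_coupling_cov : psd M -> psd D -> psd S1 -> psd S2 -> psd coupling_cov.
Proof.
by move=> *; rewrite /coupling_cov /=; do 3?apply: psdD; apply: psd_mulmx_tr.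
Qed.

Lemma covsub_coupling_XY1 :
  covsub coupling_cov (catidx X Y1) (catidx X Y1) =
  block_mx (M + D) (M *m F1^T) (F1 *m M) (F1 *m M *m F1^T + S1).
Proof. by rewrite covsub_catl !covsub_catr; covsub_blocks. Qed.

Lemma covsub_coupling_XY2 :
  covsub coupling_cov (catidx X Y2) (catidx X Y2) =
  block_mx (M + D) (M *m F2^T) (F2 *m M) (F2 *m M *m F2^T + S2).
Proof. by rewrite covsub_catl !covsub_catr; covsub_blocks. Qed.

Lemma coupling_markov : gauss_markov coupling_cov X Y (catidx Y1 Y2).
Proof.
rewrite /gauss_markov /condcrosscov !covsub_catr; covsub_blocks.
by rewrite -mul_mx_row mulmxA mulmxKpV // subrr.
Qed.

Lemma condcov_coupling : condcov coupling_cov X Y = D.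
Proof.
rewrite /condcov /condcrosscov; covsub_blocks.
by rewrite mulmxKpV // [M + D]addrC addrK.
Qed.

End CouplingCov.

Lemma gauss_coupling (M D : 'M[R]_n) (C1 : 'M[R]_(n, k1)) (T1 : 'M[R]_k1)
    (C2 : 'M[R]_(n, k2)) (T2 : 'M[R]_k2) :
  psd D -> psd (block_mx M C1 C1^T T1) -> psd (block_mx M C2 C2^T T2) ->
  exists K : 'M[R]_(n + (k1 + (k2 + n))),
  [/\ psd K,
      covsub K (catidx X Y1) (catidx X Y1) = block_mx (M + D) C1 C1^T T1,
      covsub K (catidx X Y2) (catidx X Y2) = block_mx (M + D) C2 C2^T T2,
      gauss_markov K X Y (catidx Y1 Y2) & condcov K X Y = D].
Proof.
move=> Dpsd K1psd K2psd; have Mpsd := psd_block_ul K1psd.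
have [F1 [S1 [S1psd F1M MF1 ->]]] := psd_block_regress K1psd.
have [F2 [S2 [S2psd F2M MF2 ->]]] := psd_block_regress K2psd.
exists (coupling_cov M D F1 F2 S1 S2); split.
- exact: psd_coupling_cov.
- by rewrite covsub_coupling_XY1 F1M MF1.
- by rewrite covsub_coupling_XY2 F2M MF2.
- exact: coupling_markov.
- exact: condcov_coupling.
Qed.

Lemma gauss_coupling_condcov (K1 : 'M[R]_(n + k1)) (K2 : 'M[R]_(n + k2))
    (D : 'M[R]_n) :
  psd K1 -> psd K2 -> ulsubmx K1 = ulsubmx K2 -> psd D ->
  psd (condcov K1 (@lshift n k1) (@rshift n k1) - D) ->
  psd (condcov K2 (@lshift n k2) (@rshift n k2) - D) ->
  exists K : 'M[R]_(n + (k1 + (k2 + n))),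
  [/\ psd K, covsub K (catidx X Y1) (catidx X Y1) = K1,
      covsub K (catidx X Y2) (catidx X Y2) = K2,
      gauss_markov K X Y (catidx Y1 Y2) & condcov K X Y = D].
Proof.
move=> K1psd K2psd eUL Dpsd D1D D2D.
have [sK1 _] := K1psd; have [sK2 _] := K2psd.
rewrite condcov_lshift // in D1D; rewrite condcov_lshift // -eUL in D2D.
have K1blk : psd (block_mx (ulsubmx K1) (ursubmx K1) (ursubmx K1)^T (drsubmx K1)).
  by rewrite sym_submxK.
have K2blk : psd (block_mx (ulsubmx K1) (ursubmx K2) (ursubmx K2)^T (drsubmx K2)).
  by rewrite eUL sym_submxK.
have M1psd : psd (block_mx (ulsubmx K1 - D) (ursubmx K1) (ursubmx K1)^T (drsubmx K1)).
  by apply: (psd_block_schur K1blk); rewrite addrAC.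
have M2psd : psd (block_mx (ulsubmx K1 - D) (ursubmx K2) (ursubmx K2)^T (drsubmx K2)).
  by apply: (psd_block_schur K2blk); rewrite addrAC.
have [K [Kpsd eKY1 eKY2 markov eDK]] := gauss_coupling Dpsd M1psd M2psd.
rewrite subrK sym_submxK // in eKY1; rewrite subrK eUL sym_submxK // in eKY2.
by exists K.
Qed.

End Coupling.

Unset Implicit Arguments. Set Strict Implicit.

Theorem lemma2 (R : realType) (l1 l2 k1 k2 : nat)
  (K1 : 'M[R]_(l1 + l2 + k1)) (K2 : 'M[R]_(l1 + l2 + k2))
  (A : 'M[R]_l1) (B : 'M[R]_l2) :
  psd K1 -> psd K2 ->
  ulsubmx K1 = ulsubmx K2 ->
  condcov K1 (@lshift (l1 + l2) k1) (@rshift (l1 + l2) k1) \in unitmx ->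
  condcov K2 (@lshift (l1 + l2) k2) (@rshift (l1 + l2) k2) \in unitmx ->
  invmx (condcov K2 (@lshift (l1 + l2) k2) (@rshift (l1 + l2) k2))
    - invmx (condcov K1 (@lshift (l1 + l2) k1) (@rshift (l1 + l2) k1))
    = block_mx A 0 0 B ->
  is_diag_mx A -> psd A -> is_diag_mx B -> negdef B ->
  exists (m : nat) (K : 'M[R]_(l1 + l2 + (k1 + (k2 + m)))),
    let X  := fun i : 'I_(l1 + l2) => @lshift (l1 + l2) (k1 + (k2 + m)) i in
    let Y1 := fun j : 'I_k1 =>
      @rshift (l1 + l2) (k1 + (k2 + m)) (@lshift k1 (k2 + m) j) in
    let Y2 := fun j : 'I_k2 =>
      @rshift (l1 + l2) (k1 + (k2 + m))
        (@rshift k1 (k2 + m) (@lshift k2 m j)) in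
    let Y  := fun j : 'I_m =>
      @rshift (l1 + l2) (k1 + (k2 + m))
        (@rshift k1 (k2 + m) (@rshift k2 m j)) in
    psd K /\
        covsub K (catidx X Y1) (catidx X Y1) = K1 /\
        covsub K (catidx X Y2) (catidx X Y2) = K2 /\
        gauss_markov K X Y (catidx Y1 Y2) /\
        condcov K X Y \in unitmx /\
        invmx (condcov K X Y) =
          invmx (condcov K1 (@lshift (l1 + l2) k1) (@rshift (l1 + l2) k1))
          + block_mx A 0 0 0 /\
        invmx (condcov K X Y) =
          invmx (condcov K2 (@lshift (l1 + l2) k2) (@rshift (l1 + l2) k2))
          + block_mx 0 0 0 (- B).
Proof.
move=> K1psd K2psd eUL uD1 uD2 eDiff _ Apsd _ Bnegdef.
set D1 := condcov K1 _ _ in uD1 eDiff *; set D2 := condcov K2 _ _ in uD2 eDiff *.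
have E1psd : psd (block_mx A 0 0 (0 : 'M_l2)) := psd_block_diag Apsd (psd0 _ _).
have E2psd : psd (block_mx (0 : 'M_l1) 0 0 (- B)) :=
  psd_block_diag (psd0 _ _) (negdef_psdN Bnegdef).
have eP : invmx D2 + block_mx 0 0 0 (- B) = invmx D1 + block_mx A 0 0 0.
  rewrite -[invmx D2](subrK (invmx D1)) eDiff addrAC add_block_mx.
  by rewrite !(addr0, add0r) subrr addrC.
set P := invmx D1 + block_mx A 0 0 0 in eP *.
have D1psd := psd_condcov K1psd; have D2psd := psd_condcov K2psd.
have iD1psd := psd_invmx D1psd uD1.
have uP : P \in unitmx by apply: psd_unitmxD iD1psd _ E1psd; rewrite unitmx_inv.
have D1D : psd (D1 - invmx P) := psd_subr_invmxD D1psd uD1 E1psd.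
have D2D : psd (D2 - invmx P) by rewrite -eP; apply: psd_subr_invmxD.
have [K [Kpsd eKY1 eKY2 markov eDK]] := gauss_coupling_condcov K1psd K2psd eUL
  (psd_invmx (psdD iD1psd E1psd) uP) D1D D2D.
exists (l1 + l2)%N, K; rewrite /= eDK invmxK eP unitmx_inv.
by do !(split; first done).
Qed.
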